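(* Let $\{\mu_t\}$ be a free convolution semigroup, $s\le t$, and let $\mathcal K_{s,t}^\ast$ be the adjoint of $\mathcal K_{s,t}$ on $\mathcal M$, i.e. $\langle\mathcal K_{s,t}^\ast\nu,p\rangle=\langle\nu,\mathcal K_{s,t}p\rangle$. Then for every $\nu\in\mathcal M$, $G_{\mathcal K_{s,t}^\ast\nu}(z)=G_\nu(F_{s,t}(z))$. In particular, if $\{P_n(x,t)\}_{n\ge0}$ is a family of martingale polynomials for $\{\mu_t\}$ with $\deg P_n=n$, and $\{P_n^\ast(t)\}$ is the dual basis of $\mathcal M$ (i.e. $\langle P_n^\ast(t),P_k(\cdot,t)\rangle=\delta_{nk}$), then $G_{P_n^\ast(t)}(z)=G_{P_n^\ast(s)}(F_{s,t}(z))$.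
   Context: $\mathcal M$ is the space of linear functionals on $\mathbb C[x]$; for $\nu\in\mathcal M$, $G_\nu(z)=\sum_{n\ge0}\langle\nu,x^n\rangle z^{-(n+1)}$ (formal series in $z^{-1}$). $\mu$ is a freely infinitely divisible probability measure with all moments finite, $\{\mu_t\}$ its free convolution semigroup ($R_{\mu_t}=tR_\mu$, where $R_\nu=K_\nu-\frac1z$ and $K_\nu$ is the compositional inverse of $G_\nu$), $G_t=G_{\mu_t}$, $K_t=K_{\mu_t}$, $F_{s,t}=K_s\circ G_t$. $\mathcal K_{s,t}$ is the linear operator on $\mathbb C[x]$ determined coefficientwise by $\mathcal K_{s,t}(\mathrm{Res}_z)=\mathrm{Res}_{F_{s,t}(z)}$, $\mathrm{Res}_z(x)=\frac{1}{z-x}=\sum x^nz^{-(n+1)}$. A martingale polynomial is $p(x,t)$, polynomial in $x$, with $\mathcal K_{s,t}(p(\cdot,t))=p(\cdot,s)$ for $s<t$. *)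

From HB Require Import structures.
From mathcomp Require Import all_boot all_order all_algebra.
From mathcomp Require Import all_classical all_reals all_analysis.
From mathcomp Require Import complex.

Set Implicit Arguments.
Unset Strict Implicit.
Unset Printing Implicit Defensive.

Import Order.TTheory GRing.Theory Num.Theory.
Local Open Scope ring_scope.

(* Formal power series in a variable w (here w = z^{-1}), represented  *)
(* by their coefficient sequences  a : nat -> C  (a n = [w^n] a).      *)
Section FPS.
Variable C : fieldType.

Definition sone : nat -> C := fun n => (n == 0)%:R.

Definition smul (a b : nat -> C) : nat -> C :=
  fun n => \sum_(i < n.+1) a i * b (n - i)%N.

Definition spow (a : nat -> C) (k : nat) : nat -> C := iter k (smul a) sone.

Definition sshift (a : nat -> C) : nat -> C :=
  fun n => if n is n'.+1 then a n' else 0.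

Definition sadd (a b : nat -> C) : nat -> C := fun n => a n + b n.

(* multiplicative inverse of a series with invertible constant term:
   b 0 = (a 0)^-1,  b n = - (a 0)^-1 * \sum_{i=1}^n a i * b (n - i). *)
Fixpoint sinv_seq (a : nat -> C) (n : nat) : seq C :=
  match n with
  | 0 => [:: (a 0%N)^-1]
  | n'.+1 =>
      let s := sinv_seq a n' in
      rcons s (- (a 0%N)^-1 * \sum_(j < n'.+1) a j.+1 * nth 0 s (n' - j)%N)
  end.
Definition sinv (a : nat -> C) : nat -> C := fun n => nth 0 (sinv_seq a n) n.

(* composition a(b(w)) of power series, for b with b 0 = 0 *)
Definition scomp (a b : nat -> C) : nat -> C :=
  fun n => \sum_(j < n.+1) a j * spow b j n.

(* A Cauchy-type series  G(z) = \sum_n g n z^{-(n+1)}  is represented by g.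
   A Laurent series of the form  Phi(z) = z * h(1/z)  with h 0 <> 0 is
   represented by h.  [cauchy_comp g h] is the coefficient sequence of
   G(Phi(z)) = \sum_n g n Phi(z)^{-(n+1)}, expanded in powers of z^{-1}
   (it is again of Cauchy type: its coefficient of z^{-(k+1)} is k-th entry),
   using  Phi(z)^{-1} = w * (1/h)(w),  w = z^{-1}. *)
Definition recip_laurent (h : nat -> C) : nat -> C := sshift (sinv h).

Definition cauchy_comp (g h : nat -> C) : nat -> C :=
  fun k => \sum_(n < k.+1) g n * spow (recip_laurent h) n.+1 k.+1.

(* R-transform: r is the R-transform of the Cauchy-type series with
   coefficients m (m 0 = 1), i.e. K(w) = 1/w + R(w) with R(w) = \sum r n w^n
   is the compositional inverse of G: G(K(w)) = w.  Here K(w) = w^{-1} hK(w)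
   with hK = 1 + w R(w). *)
Definition K_of_R (r : nat -> C) : nat -> C := sadd sone (sshift r).

Definition is_Rtransform (m r : nat -> C) : Prop :=
  forall k, cauchy_comp m (K_of_R r) k = (k == 0)%:R.

(* F_{s,t} = K_s o G_t, where G_t(z) = \sum m_t n z^{-(n+1)} = w * mt(w)
   and K_s(u) = u^{-1} + R_s(u).  Then
   F_{s,t}(z) = z * hF(w),  hF = (1/mt) + w * R_s(w * mt(w)). *)
Definition F_laurent (rs mt : nat -> C) : nat -> C :=
  sadd (sinv mt) (sshift (scomp rs (sshift mt))).

End FPS.

(* The operator K_{s,t} on C[x], determined coefficientwise by         *)
(*   K_{s,t}(Res_z) = Res_{F_{s,t}(z)},  Res_z(x) = \sum x^n z^{-(n+1)}: *)
(* K_{s,t}(x^k) = [z^{-(k+1)}] \sum_n x^n F(z)^{-(n+1)}.               *)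
Section Operator.
Variable C : fieldType.

Definition Kmono (hF : nat -> C) (k : nat) : {poly C} :=
  \sum_(n < k.+1) (spow (recip_laurent hF) n.+1 k.+1) *: 'X^n.

Definition Kop (hF : nat -> C) (p : {poly C}) : {poly C} :=
  \sum_(k < size p) p`_k *: Kmono hF k.

(* Linear functionals on C[x] (the space M) and their Cauchy series *)
Definition lin_functional (nu : {poly C} -> C) : Prop :=
  forall (a : C) (p q : {poly C}), nu (a *: p + q) = a * nu p + nu q.

Definition Gfun (nu : {poly C} -> C) : nat -> C := fun n => nu 'X^n.

Definition Kadj (hF : nat -> C) (nu : {poly C} -> C) : {poly C} -> C :=
  fun p => nu (Kop hF p).

End Operator.

Section Moments.
Variable R : realType.
Local Open Scope ereal_scope.

Definition finite_moments (P : probability R R) : Prop :=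
  forall n : nat, P.-integrable setT (fun x : R => (x ^+ n)%:E).

Definition moment (P : probability R R) (n : nat) : R :=
  fine (\int[P]_x (x ^+ n)%:E).

Local Close Scope ereal_scope.

Definition cmoment (P : probability R R) : nat -> R[i] :=
  fun n => real_complex R (moment P n).

Definition rscale (t : R) (r : nat -> R[i]) : nat -> R[i] :=
  fun n => real_complex R t * r n.

(* free infinite divisibility, at the level of R-transforms: for every
   n >= 1 there is a probability measure nu with all moments finite and
   R_nu = (1/n) R_mu, i.e. nu^{boxplus n} = mu. *)
Definition freely_inf_div (P : probability R R) : Prop :=
  forall r : nat -> R[i], is_Rtransform (cmoment P) r ->
  forall n : nat, (0 < n)%N ->
  exists nu : probability R R, finite_moments nu /\
     is_Rtransform (cmoment nu) (rscale (n%:R^-1) r).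

(* the Laurent series F_{s,t} = K_s o G_t for the semigroup with
   R_{mu_s} = s R_mu *)
Definition Fst (r : nat -> R[i]) (s : R) (mut : probability R R) : nat -> R[i] :=
  F_laurent (rscale s r) (cmoment mut).

End Moments.

From HB Require Import structures.
From mathcomp Require Import all_boot all_order all_algebra.
From mathcomp Require Import all_classical all_reals all_analysis.
From mathcomp Require Import complex.
From mathcomp Require Import ring.
Set Implicit Arguments.
Unset Strict Implicit.
Unset Printing Implicit Defensive.
Import Order.TTheory GRing.Theory Num.Theory.
Local Open Scope ring_scope.

(* Everything is a statement about formal power series in w = 1/z, handled
   through their truncations in C[w] modulo w^N.  The first claim is
   linearity: nu(K_{s,t} x^k) is the coefficient of z^-(k+1) in
   sum_n nu(x^n) F_{s,t}(z)^-(n+1).  For the second, K_{s,t} maps P_j(.,t) to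
   P_j(.,s), so the linear functionals P*_n(s) o K_{s,t} and P*_n(t) agree on
   the graded basis (P_j(.,t))_j, hence coincide.  When s = t this needs
   F_{t,t} = K_t o G_t = id: the R-transform gives G_t o K_t = id, and a series
   tangent to the identity with a left compositional inverse has it as a right
   inverse as well. *)

Section TruncatedEquality.
Variable C : fieldType.
Implicit Types p q c g h phi u v : {poly C}.

Definition eqm (N : nat) p q := 'X^N %| p - q.

Lemma dvdXnP N p : reflect (forall i, (i < N)%N -> p`_i = 0) ('X^N %| p).
Proof.
apply: (iffP idP) => [/dvdpP [d ->] i iN | p_small]; first by rewrite coefMXn iN.
have take0 : take_poly N p = 0.
  by apply/polyP => i; rewrite coef_take_poly coef0; case: ifP => // /p_small.
by rewrite -(poly_take_drop N p) take0 add0r dvdp_mull.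
Qed.

Lemma eqmP N p q : reflect (forall i, (i < N)%N -> p`_i = q`_i) (eqm N p q).
Proof.
apply: (iffP (dvdXnP _ _)) => eq_pq i iN; last by rewrite coefB eq_pq ?subrr.
by apply/eqP; rewrite -subr_eq0 -coefB eq_pq.
Qed.

Lemma eqm_refl N p : eqm N p p.
Proof. by rewrite /eqm subrr dvdp0. Qed.

Lemma eqm_sym N p q : eqm N p q -> eqm N q p.
Proof. by rewrite /eqm -opprB dvdpNr. Qed.

Lemma eqm_trans N p q r : eqm N p q -> eqm N q r -> eqm N p r.
Proof. by rewrite /eqm -(subrKA q p (- r)); apply: dvdp_add. Qed.

Lemma eqm0 p q : eqm 0 p q.
Proof. by rewrite /eqm expr0 dvd1p. Qed.

Lemma eqm_le M N p q : (M <= N)%N -> eqm N p q -> eqm M p q.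
Proof. by move=> le_MN; apply/dvdp_trans/dvdp_exp2l. Qed.

Lemma eqmD N p q p' q' : eqm N p q -> eqm N p' q' -> eqm N (p + p') (q + q').
Proof. by rewrite /eqm opprD addrACA; apply: dvdp_add. Qed.

Lemma eqmM N p q p' q' : eqm N p q -> eqm N p' q' -> eqm N (p * p') (q * q').
Proof.
move=> Epq Epq'; rewrite /eqm -(subrKA (q * p') (p * p') (- (q * q'))) -mulrBl -mulrBr.
by apply: dvdp_add; [apply: dvdp_mulr | apply: dvdp_mull].
Qed.

Lemma eqmX N p q k : eqm N p q -> eqm N (p ^+ k) (q ^+ k).
Proof.
by move=> Epq; elim: k => [|k IHk]; rewrite ?eqm_refl // !exprS; apply: eqmM.
Qed.

Lemma eqm_mulXI N p q : eqm N.+1 ('X * p) ('X * q) -> eqm N p q.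
Proof.
by move=> /eqmP EXpq; apply/eqmP => i iN; have := EXpq i.+1 iN; rewrite !coefXM.
Qed.

Lemma eqm_mulIl N u v p q :
  eqm N (u * v) 1 -> eqm N (u * p) (u * q) -> eqm N p q.
Proof.
move=> uv1 Eupq; have vu1 : eqm N (v * u) 1 by rewrite mulrC.
have Ep : eqm N p (v * u * p).
  by rewrite -{1}[p]mul1r; apply: eqmM (eqm_sym vu1) (eqm_refl _ _).
have Eq : eqm N (v * u * q) q.
  by rewrite -{2}[q]mul1r; apply: eqmM vu1 (eqm_refl _ _).
apply: eqm_trans Ep (eqm_trans _ Eq); rewrite -!mulrA.
exact: eqmM (eqm_refl _ _) Eupq.
Qed.

Lemma dvdX_coef0 c : ('X %| c) = (c`_0 == 0).
Proof. by rewrite -['X]subr0 -polyC0 dvdp_XsubCl /root horner_coef0. Qed.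

Lemma coef_comp_poly_dvdX p c n : c`_0 = 0 ->
  (p \Po c)`_n = \sum_(i < n.+1) p`_i * (c ^+ i)`_n.
Proof.
move=> c0; have Xc : 'X %| c by rewrite dvdX_coef0 c0.
pose F i := p`_i * (c ^+ i)`_n; rewrite coef_comp_poly.
transitivity (\sum_(i < size p + n.+1) F i).
  rewrite (big_ord_widen (size p + n.+1) F (leq_addr _ _)) [LHS]big_mkcond.
  by apply: eq_bigr => i _; rewrite /F; case: ltnP => // /leq_sizeP ->; rewrite ?mul0r.
rewrite [RHS](big_ord_widen (size p + n.+1) F (leq_addl _ _)) [RHS]big_mkcond.
apply: eq_bigr => i _; rewrite /F; case: ltnP => // lt_ni.
by have /dvdXnP -> := dvdp_exp2r i Xc; rewrite ?mulr0.
Qed.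

Lemma comp_poly1 c : 1 \Po c = 1.
Proof. by rewrite -polyC1 comp_polyC. Qed.

Lemma eqm_compl N p q c : c`_0 = 0 -> eqm N p q -> eqm N (p \Po c) (q \Po c).
Proof.
move=> c0 /dvdpP [d Ed]; rewrite /eqm -comp_polyB Ed comp_polyM comp_Xn_poly.
by apply/dvdp_mull/dvdp_exp2r; rewrite dvdX_coef0 c0.
Qed.

Lemma eqm_compr N p c c' : eqm N c c' -> eqm N (p \Po c) (p \Po c').
Proof.
move=> Ec; elim/poly_ind: p => [|p a IHp]; first by rewrite !comp_poly0 eqm_refl.
by rewrite !comp_poly_MXaddC; apply: eqmD (eqmM IHp Ec) (eqm_refl _ _).
Qed.

Lemma eqm_compI N g phi : g`_0 = 0 -> g`_1 = 1 -> phi`_0 = 0 ->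
  eqm N (g \Po phi) g -> eqm N phi 'X.
Proof.
move=> g0 g1 phi0 g_phi.
have [Q defg] : exists Q, g = 'X + Q * 'X^2.
  have : 'X^2 %| g - 'X.
    by apply/dvdXnP => -[|[|]] // _; rewrite coefB coefX ?g0 ?g1 subrr.
  by case/dvdpP => Q /eqP; rewrite subr_eq addrC => /eqP ->; exists Q.
have Xphi : 'X %| phi by rewrite dvdX_coef0 phi0.
suff phiX k : (k <= N)%N -> eqm k phi 'X by apply: phiX.
elim: k => [|k IHk] le_kN; first exact: eqm0.
have {}IHk : eqm k phi 'X := IHk (ltnW le_kN).
have := eqm_le le_kN g_phi.
rewrite /eqm defg comp_polyD comp_polyX comp_polyM comp_Xn_poly.
have -> : phi + (Q \Po phi) * phi ^+ 2 - ('X + Q * 'X^2) =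
    (phi - 'X) + (((Q \Po phi) - Q) * phi ^+ 2 + Q * ((phi + 'X) * (phi - 'X))).
  by ring.
(* ['X] divides [phi + 'X] and [phi ^+ 2], and [Q \Po phi = Q] modulo ['X^k]. *)
rewrite dvdp_addl // exprSr; apply: dvdp_add; last first.
  by apply/dvdp_mull; rewrite mulrC dvdp_mul // dvdp_add.
apply: dvdp_mul; last by rewrite dvdp_mulr.
by have := eqm_compr Q IHk; rewrite comp_polyXr.
Qed.

Lemma eqm_comp_inv_sym N g h : g`_0 = 0 -> g`_1 = 1 -> h`_0 = 0 ->
  eqm N (g \Po h) 'X -> eqm N (h \Po g) 'X.
Proof.
move=> g0 g1 h0 gh; apply: (eqm_compI g0 g1).
  by rewrite coef_comp_poly_dvdX // big_ord1 expr0 coef1 mulr1.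
by rewrite comp_polyA -[X in eqm _ _ X]comp_polyX eqm_compl.
Qed.

End TruncatedEquality.

Section SeriesTruncation.
Variable C : fieldType.
Implicit Types (a b : nat -> C) (p : {poly C}).

Definition trunc N a : {poly C} := \poly_(i < N) a i.

Lemma coef_trunc N a i : (i < N)%N -> (trunc N a)`_i = a i.
Proof. by move=> iN; rewrite coef_poly iN. Qed.

Lemma eqm_truncP N a p :
  reflect (forall i, (i < N)%N -> a i = p`_i) (eqm N (trunc N a) p).
Proof.
by apply: (iffP (eqmP _ _ _)) => E i iN; rewrite -E // coef_trunc.
Qed.

Lemma trunc_sone N : eqm N (trunc N (sone C)) 1.
Proof. by apply/eqm_truncP => i _; rewrite coef1. Qed.

Lemma trunc_sadd N a b : trunc N (sadd a b) = trunc N a + trunc N b.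
Proof. by apply/polyP => i; rewrite coefD !coef_poly; case: ifP; rewrite ?addr0. Qed.

Lemma trunc_sshift N a : eqm N (trunc N (sshift a)) ('X * trunc N a).
Proof. by apply/eqm_truncP => -[|i] iN; rewrite coefXM //= coef_trunc // ltnW. Qed.

Lemma trunc_smul N a b : eqm N (trunc N (smul a b)) (trunc N a * trunc N b).
Proof.
apply/eqm_truncP => i iN; rewrite coefM; apply: eq_bigr => j _.
have lt_jN : (j < N)%N by apply: leq_ltn_trans iN; rewrite -ltnS.
by rewrite !coef_trunc // (leq_ltn_trans (leq_subr _ _) iN).
Qed.

Lemma trunc_spow N a k : eqm N (trunc N (spow a k)) (trunc N a ^+ k).
Proof.
elim: k => [|k IHk]; first exact: trunc_sone.
by rewrite exprS; apply: eqm_trans (trunc_smul _ _ _) (eqmM (eqm_refl _ _) IHk).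
Qed.

Lemma trunc_scomp N a b : b 0%N = 0 ->
  eqm N (trunc N (scomp a b)) (trunc N a \Po trunc N b).
Proof.
move=> b0; apply/eqm_truncP => i iN.
rewrite coef_comp_poly_dvdX; last by case: N iN => // N _; rewrite coef_trunc.
apply: eq_bigr => j _; have le_ji : (j <= i)%N by rewrite -ltnS.
rewrite coef_trunc ?(leq_ltn_trans le_ji) //.
by have /eqm_truncP -> := trunc_spow N b j.
Qed.

Lemma size_sinv_seq a n : size (sinv_seq a n) = n.+1.
Proof. by elim: n => //= n IHn; rewrite size_rcons IHn. Qed.

Lemma nth_sinv_seq a n i : (i <= n)%N -> nth 0 (sinv_seq a n) i = sinv a i.
Proof.
elim: n => [|n IHn]; first by rewrite leqn0 => /eqP ->.
rewrite leq_eqVlt => /predU1P [-> //|]; rewrite ltnS => le_in.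
by rewrite /= nth_rcons size_sinv_seq ltnS le_in IHn.
Qed.

Lemma sinvS a n :
  sinv a n.+1 = - (a 0%N)^-1 * \sum_(j < n.+1) a j.+1 * sinv a (n - j).
Proof.
rewrite {1}/sinv /= nth_rcons size_sinv_seq ltnn eqxx.
by congr (_ * _); apply: eq_bigr => j _; rewrite nth_sinv_seq // leq_subr.
Qed.

Lemma smul_sinv a : a 0%N != 0 -> smul a (sinv a) =1 sone C.
Proof.
move=> a0 [|n]; first by rewrite /smul big_ord1 /sinv /= mulfV.
rewrite /smul big_ord_recl subn0 sinvS mulrA mulrN mulfV // mulN1r.
rewrite /sone /=; apply/eqP; rewrite addrC subr_eq0.
by apply/eqP/eq_bigr.
Qed.

Lemma trunc_sinv N a : a 0%N != 0 -> eqm N (trunc N a * trunc N (sinv a)) 1.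
Proof.
move=> a0; apply: eqm_trans (eqm_sym (trunc_smul _ _ _)) _.
by apply/eqm_truncP => i _; rewrite smul_sinv // coef1.
Qed.

Lemma sinv_sone : sinv (sone C) =1 sone C.
Proof.
case=> [|n]; first by rewrite /sinv /= invr1.
by rewrite sinvS big1 ?mulr0 // => j _; rewrite /sone mul0r.
Qed.

End SeriesTruncation.

Section RtransformInverse.
Variables (C : fieldType) (m rho : nat -> C).
Hypothesis m_rho : is_Rtransform m rho.

Let hK := K_of_R rho.
Let g := recip_laurent hK.

Lemma K_of_R0 : hK 0%N = 1.
Proof. by rewrite /hK /K_of_R /sadd /sone /= addr0. Qed.

Lemma Rtransform_coef0 : m 0%N = 1.
Proof.
have := m_rho 0; rewrite /cauchy_comp big_ord1.
have /eqm_truncP -> // := trunc_spow 2 g 1.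
by rewrite expr1 coef_trunc // /g /recip_laurent /sshift /sinv /= K_of_R0 invr1 mulr1.
Qed.

(* In the variable w, G(z) = w m(w) is [sshift m] and 1/K(w) is [g]; the
   defining identity G(K(w)) = w of the R-transform reads G o g = w. *)
Lemma Rtransform_comp N : eqm N (trunc N (sshift m) \Po trunc N g) 'X.
Proof.
have g0 : (trunc N g)`_0 = 0 by rewrite coef_poly; case: ifP.
have G0 : (trunc N (sshift m))`_0 = 0 by rewrite coef_poly; case: ifP.
apply/eqmP => -[|k] kN.
  by rewrite coef_comp_poly_dvdX // big_ord1 G0 mul0r coefX.
rewrite coef_comp_poly_dvdX // big_ord_recl G0 mul0r add0r.
rewrite coefX eqSS -(m_rho k); apply: eq_bigr => j _.
have le_jk : (j <= k)%N by rewrite -ltnS.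
have /eqm_truncP spow_g := trunc_spow N g j.+1.
by rewrite coef_trunc -?spow_g // (leq_ltn_trans _ kN).
Qed.

Lemma K_of_R_comp N :
  eqm N (trunc N.+1 hK \Po trunc N.+1 (sshift m)) (trunc N.+1 m).
Proof.
case: N => [|N]; first exact: eqm0.
set G := trunc N.+2 (sshift m); set M := trunc N.+2 m.
set IhK := trunc N.+2 (sinv hK).
have G0 : G`_0 = 0 by rewrite coef_trunc.
have G1 : G`_1 = 1 by rewrite coef_trunc //= Rtransform_coef0.
have g0 : (trunc N.+2 g)`_0 = 0 by rewrite coef_trunc.
have gG : eqm N.+2 (trunc N.+2 g \Po G) 'X.
  exact: eqm_comp_inv_sym G0 G1 g0 (Rtransform_comp N.+2).
have defG : eqm N.+2 G ('X * M) by apply: trunc_sshift.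
(* g o G = w and g = w / hK give G / hK(G) = w = G / m, so hK(G) = m. *)
have M_IhK : eqm N.+1 (M * (IhK \Po G)) 1.
  apply: eqm_mulXI; rewrite mulr1 mulrA; apply: eqm_trans gG.
  apply: eqm_trans _ (eqm_sym (eqm_compl G0 (trunc_sshift _ _))).
  by rewrite comp_polyM comp_polyX; apply: eqmM (eqm_sym defG) (eqm_refl _ _).
have hK_IhK : eqm N.+1 ((IhK \Po G) * (trunc N.+2 hK \Po G)) 1.
  rewrite mulrC -comp_polyM -(comp_poly1 G); apply: eqm_le (eqm_compl G0 _) => //.
  by apply: trunc_sinv; rewrite K_of_R0 oner_neq0.
apply: (eqm_mulIl hK_IhK); apply: eqm_trans hK_IhK _.
by rewrite mulrC; apply: eqm_sym.
Qed.

Lemma F_laurent_Rtransform : F_laurent rho m = sone C.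
Proof.
apply: funext => n; set N := n.+1.
set G := trunc N.+1 (sshift m); set M := trunc N.+1 m.
set IM := trunc N.+1 (sinv m); set R := trunc N.+1 rho.
have G0 : G`_0 = 0 by rewrite coef_trunc.
have M_IM : eqm N.+1 (M * IM) 1.
  by apply: trunc_sinv; rewrite Rtransform_coef0 oner_neq0.
have defF : eqm N.+1 (trunc N.+1 (F_laurent rho m)) (IM + 'X * (R \Po G)).
  rewrite /F_laurent trunc_sadd; apply: eqmD (eqm_refl _ _) _.
  by apply: eqm_trans (trunc_sshift _ _) (eqmM (eqm_refl _ _) (trunc_scomp _ _ _)).
have defhK : eqm N.+1 (trunc N.+1 hK \Po G) (1 + G * (R \Po G)).
  have : eqm N.+1 (trunc N.+1 hK) (1 + 'X * R).
    rewrite /hK /K_of_R trunc_sadd.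
    by apply: eqmD; [exact: trunc_sone | exact: trunc_sshift].
  by move/(eqm_compl G0); rewrite comp_polyD comp_polyM comp_polyX comp_poly1.
(* m (1/m + w rho(G)) = 1 + G rho(G) = hK(G) = m. *)
suff : eqm N (trunc N.+1 (F_laurent rho m)) 1.
  by move/eqmP/(_ n (ltnSn n)); rewrite coef_trunc // coef1.
apply: eqm_trans (eqm_le (leqnSn N) defF) _.
apply: (eqm_mulIl (eqm_le (leqnSn N) M_IM)).
rewrite mulr1 mulrDr mulrA [M * 'X]mulrC; apply: eqm_trans (K_of_R_comp N).
apply: eqm_le (leqnSn N) (eqm_sym (eqm_trans defhK _)).
exact: eqmD (eqm_sym M_IM) (eqmM (trunc_sshift _ _) (eqm_refl _ _)).
Qed.

End RtransformInverse.

Section Operator.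
Variable C : fieldType.
Implicit Types (hF : nat -> C) (p q : {poly C}) (nu : {poly C} -> C).

Lemma Kop_widen hF p N : (size p <= N)%N ->
  Kop hF p = \sum_(k < N) p`_k *: Kmono hF k.
Proof.
move=> le_pN; rewrite /Kop (big_ord_widen N (fun k => p`_k *: Kmono hF k)) //.
rewrite big_mkcond; apply: eq_bigr => k _; case: ltnP => // /leq_sizeP -> //.
by rewrite scale0r.
Qed.

Lemma Kop_linear hF a p q : Kop hF (a *: p + q) = a *: Kop hF p + Kop hF q.
Proof.
set N := (size p + size q)%N.
have le_pN : (size p <= N)%N by rewrite leq_addr.
have le_qN : (size q <= N)%N by rewrite leq_addl.
have le_apqN : (size (a *: p + q)%R <= N)%N.
  rewrite (leq_trans (size_polyD _ _)) // geq_max le_qN andbT.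
  exact: leq_trans (size_scale_leq _ _) le_pN.
rewrite (Kop_widen hF le_pN) (Kop_widen hF le_qN) (Kop_widen hF le_apqN).
rewrite scaler_sumr -big_split.
by apply: eq_bigr => k _; rewrite coefD coefZ scalerDl scalerA.
Qed.

Lemma Kop_Xn hF k : Kop hF 'X^k = Kmono hF k.
Proof.
rewrite /Kop size_polyXn big_ord_recr /= coefXn eqxx scale1r big1 ?add0r // => i _.
by rewrite coefXn (ltn_eqF (ltn_ord i)) scale0r.
Qed.

Lemma lin_functional0 nu : lin_functional nu -> nu 0 = 0.
Proof.
move=> nu_lin; apply: (addrI (nu 0)); rewrite addr0.
by have := nu_lin 1 0 0; rewrite scale1r addr0 mul1r => <-.
Qed.

Lemma lin_functional_sum nu n (c : 'I_n -> C) (f : 'I_n -> {poly C}) :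
  lin_functional nu -> nu (\sum_(i < n) c i *: f i) = \sum_(i < n) c i * nu (f i).
Proof.
move=> nu_lin; apply/esym/(big_rec2 (fun y x => y = nu x)) => [|i y x _ ->].
  by rewrite lin_functional0.
by rewrite nu_lin.
Qed.

Lemma Kadj_linear hF nu : lin_functional nu -> lin_functional (Kadj hF nu).
Proof. by move=> nu_lin a p q; rewrite /Kadj Kop_linear nu_lin. Qed.

Lemma Kadj_cauchy hF nu :
  lin_functional nu -> Gfun (Kadj hF nu) =1 cauchy_comp (Gfun nu) hF.
Proof.
move=> nu_lin k; rewrite /Gfun /Kadj Kop_Xn /Kmono lin_functional_sum //.
by apply: eq_bigr => n _; rewrite mulrC.
Qed.

Lemma eq_lin_functional (b : nat -> {poly C}) nu1 nu2 :
  lin_functional nu1 -> lin_functional nu2 -> (forall j, size (b j) = j.+1) ->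
  (forall j, nu1 (b j) = nu2 (b j)) -> nu1 =1 nu2.
Proof.
move=> nu1_lin nu2_lin size_b eq_b p.
elim: (size p) {-2}p (leqnn (size p)) => [|n IHn] q.
  by move/size_poly_leq0P ->; rewrite !lin_functional0.
move=> le_qn; have bn_neq0 : b n != 0 by rewrite -size_poly_eq0 size_b.
have small_q : (size (q %/ b n)%R <= 1)%N.
  by rewrite size_divp // size_b leq_subLR addn1.
have small_r : (size (q %% b n)%R <= n)%N by rewrite -ltnS -(size_b n) ltn_modp.
rewrite (divp_eq q (b n)) (size1_polyC small_q) mul_polyC.
by rewrite nu1_lin nu2_lin eq_b IHn.
Qed.

Lemma Kmono_sone k : Kmono (sone C) k = 'X^k.
Proof.
have recipX : eqm k.+2 (trunc k.+2 (recip_laurent (sone C))) 'X.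
  by apply/eqm_truncP => -[|[|i]] _; rewrite coefX //= /recip_laurent /= sinv_sone.
rewrite /Kmono (eq_bigr (fun n : 'I_k.+1 => ((n : nat) == k)%:R *: 'X^n)) => [|n _].
  rewrite big_ord_recr /= eqxx scale1r big1 ?add0r // => i _.
  by rewrite (ltn_eqF (ltn_ord i)) scale0r.
have /eqm_truncP -> // := trunc_spow k.+2 (recip_laurent (sone C)) n.+1.
by have /eqmP -> // := eqmX n.+1 recipX; rewrite coefXn eqSS eq_sym.
Qed.

Lemma Kop_sone p : Kop (sone C) p = p.
Proof.
by rewrite -[RHS]coefK poly_def; apply: eq_bigr => k _; rewrite Kmono_sone.
Qed.

End Operator.

Theorem lemma4p10 (R : realType) (mu : probability R R)
    (mut : R -> probability R R) (r : nat -> R[i]) :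
  finite_moments mu -> freely_inf_div mu ->
  is_Rtransform (cmoment mu) r ->
  (forall t : R, 0 <= t ->
     finite_moments (mut t) /\ is_Rtransform (cmoment (mut t)) (rscale t r)) ->
  forall s t : R, 0 <= s -> s <= t ->
  (forall nu : {poly R[i]} -> R[i], lin_functional nu ->
     forall k : nat,
       Gfun (Kadj (Fst r s (mut t)) nu) k
       = cauchy_comp (Gfun nu) (Fst r s (mut t)) k)
  /\
  (forall (P : nat -> R -> {poly R[i]})
          (Pstar : nat -> R -> ({poly R[i]} -> R[i])),
     (forall (n : nat) (u : R), 0 <= u -> size (P n u) = n.+1) ->
     (forall (n : nat) (u v : R), 0 <= u -> u < v ->
        Kop (Fst r u (mut v)) (P n v) = P n u) ->
     (forall (n : nat) (u : R), 0 <= u -> lin_functional (Pstar n u)) ->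
     (forall (n k : nat) (u : R), 0 <= u ->
        Pstar n u (P k u) = (n == k)%:R) ->
     forall n k : nat,
       Gfun (Pstar n t) k = cauchy_comp (Gfun (Pstar n s)) (Fst r s (mut t)) k).
Proof.
move=> _ _ _ mut_R s t s_ge0 le_st.
split=> [nu nu_lin | P Pstar size_P mart_P Pstar_lin Pstar_dual n k].
  exact: Kadj_cauchy.
have t_ge0 : 0 <= t := le_trans s_ge0 le_st.
have KP j : Kop (Fst r s (mut t)) (P j t) = P j s.
  move: le_st; rewrite le_eqVlt => /predU1P [eq_st | lt_st]; last exact: mart_P.
  by rewrite -eq_st /Fst F_laurent_Rtransform ?Kop_sone //; case: (mut_R s s_ge0).
rewrite -Kadj_cauchy /Gfun; last exact: Pstar_lin.
apply: (eq_lin_functional (b := P^~ t)).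
- exact: Pstar_lin.
- exact/Kadj_linear/Pstar_lin.
- by move=> j; apply: size_P.
- by move=> j; rewrite /Kadj KP !Pstar_dual.
Qed.
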